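(* Assume the Continuum Hypothesis. Let $X$ be a real Banach space with $\operatorname{dens} X = \operatorname{dens} X^* = \omega_1$, and let $C \subseteq X$. If $C$ cannot be covered by countably many hyperplanes of $X$, then $C$ contains an overcomplete set for $X$.
   Context: A hyperplane of a Banach space $X$ is a closed linear subspace of codimension one, i.e. the kernel of a non-zero bounded linear functional. $\operatorname{dens}$ denotes the density character. A subset $S$ of a Banach space $X$ with $|S| = \operatorname{dens} X$ is called overcomplete (for $X$) if every subset $\Lambda \subseteq S$ with $|\Lambda| = |S|$ is linearly dense in $X$ (its closed linear span is $X$). *)

From HB Require Import structures.
From mathcomp Require Import all_boot all_order all_algebra.
From mathcomp Require Import all_classical all_reals all_analysis.
Set Implicit Arguments. Unset Strict Implicit. Unset Printing Implicit Defensive.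
Import Order.TTheory GRing.Theory Num.Theory.
Import numFieldNormedType.Exports.
Local Open Scope classical_set_scope.
Local Open Scope ring_scope.
Local Open Scope card_scope.

Definition CH (R : realType) : Prop :=
  forall A : set R, countable A \/ A #= [set: R].

(* |A| = aleph_1: A is uncountable and every uncountable subset of A is
   equinumerous with A (in ZFC this holds iff |A| = aleph_1). *)
Definition card_aleph1 (T : Type) (A : set T) : Prop :=
  ~ countable A /\ forall B, B `<=` A -> ~ countable B -> B #= A.

Section Banach.
Variables (R : realType) (X : normedModType R).

Definition bounded_linear_functional (f : X -> R) : Prop :=
  (forall (a : R) (x y : X), f (a *: x + y) = a * f x + f y) /\
  exists M : R, forall x : X, `|f x| <= M * `|x|.

Definition dens_aleph1 : Prop :=
  (exists D : set X, closure D = setT /\ card_aleph1 D) /\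
  ~ (exists D : set X, closure D = setT /\ countable D).

Definition dual_dense (D : set (X -> R)) : Prop :=
  D `<=` bounded_linear_functional /\
  forall f, bounded_linear_functional f -> forall e : R, 0 < e ->
    exists2 g, D g & forall x : X, `|f x - g x| <= e * `|x|.

Definition dual_dens_aleph1 : Prop :=
  (exists D, dual_dense D /\ card_aleph1 D) /\
  ~ (exists D, dual_dense D /\ countable D).

Definition hyperplane (H : set X) : Prop :=
  exists f, bounded_linear_functional f /\ (exists x, f x != 0) /\
    H = [set x | f x = 0].

Definition lin_span (S : set X) : set X :=
  [set x | exists n (v : 'I_n -> X) (c : 'I_n -> R),
      (forall i, S (v i)) /\ x = \sum_(i < n) c i *: v i].

Definition linearly_dense (S : set X) : Prop := closure (lin_span S) = setT.

(* overcomplete set, given dens X = aleph_1 (so |S| = dens X means |S| = aleph_1) *)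
Definition overcomplete (S : set X) : Prop :=
  card_aleph1 S /\
  forall L, L `<=` S -> L #= S -> linearly_dense L.

End Banach.

(* Under CH, take a well-ordering of R whose proper initial segments are
   countable, restricted to an uncountable set I; then |I| = c.  A bounded
   functional is determined by a sequence of approximants from a dense subset
   of X^* of size aleph_1 <= c, so the nonzero functionals can be enumerated
   as (e_i)_(i in I).  By transfinite recursion choose x_i in C outside the
   kernels of the e_j with j <= i and outside a hyperplane through each
   earlier x_j: at every stage these are countably many hyperplanes, which
   cannot cover C.  The kernel of e_i then contains only countably many of the
   x_j, so an uncountable subset of S = {x_i} lies in no hyperplane, i.e. is
   linearly dense by Hahn-Banach. *)

From mathcomp Require Import all_boot all_order all_algebra.
From mathcomp Require Import all_classical all_reals all_analysis.
From mathcomp Require Import wochoice ring lra.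
Import numFieldNormedType.Exports.
Import Order.TTheory GRing.Theory Num.Theory.
Set Implicit Arguments. Unset Strict Implicit. Unset Printing Implicit Defensive.
Local Open Scope classical_set_scope.
Local Open Scope ring_scope.
Local Open Scope card_scope.

Lemma realT_uncountable (R : realType) : ~ countable [set: R].
Proof.
move=> /(sub_countable (subset_card_le (@subsetT _ `[0, 1]))).
move/countable_lebesgue_measure0; rewrite lebesgue_measure_itv /= lte01.
by rewrite oppr0 adde0 => -[] /eqP; rewrite oner_eq0.
Qed.

Lemma le0_of_le_divSn (R : archiRealFieldType) (d c : R) :
  (forall n, d <= n.+1%:R^-1 * c) -> d <= 0.
Proof.
move=> dc; apply/ler_addgt0Pr => e e0; rewrite add0r.
apply: le_trans (dc (Num.truncn (c / e))) _.
rewrite mulrC ler_pdivrMr ?ltr0Sn // mulrC -ler_pdivrMr //.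
exact/ltW/truncnS_gt.
Qed.

Section ternary_embedding.
Variable R : realType.
Local Notation w := (3^-1 : R).
Implicit Types b : nat -> bool.

Fixpoint ternary_sum (b : nat -> bool) (n : nat) : R :=
  if n is m.+1 then ternary_sum b m + (b m)%:R * w ^+ m else 0.

(* Base 3 rather than 2: the first digit where two sequences differ then
   decides which value is larger, so no two sequences share a value. *)
Definition ternary (b : nat -> bool) : R := sup (range (ternary_sum b)).

Let wX_ge0 n : 0 <= w ^+ n. Proof. by rewrite exprn_ge0. Qed.

Lemma ternary_sum_le b n j : ternary_sum b n <= ternary_sum b (n + j).
Proof.
elim: j => [|j IH]; first by rewrite addn0.
by rewrite addnS /= (le_trans IH) // lerDl mulr_ge0.
Qed.

(* [3 / 2] is the sum of the geometric series [\sum_k w ^+ k]. *)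
Lemma ternary_sum_tail b n j :
  ternary_sum b (n + j) <= ternary_sum b n + 3 / 2 * (w ^+ n - w ^+ (n + j)).
Proof.
elim: j => [|j IH]; first by rewrite addn0 subrr mulr0 addr0.
rewrite addnS /= exprSr.
have bw : (b (n + j)%N)%:R * w ^+ (n + j) <= w ^+ (n + j).
  by rewrite ler_piMl //; case: (b _).
have := wX_ge0 (n + j); lra.
Qed.

Lemma ternary_sum_le_bound b m n : ternary_sum b m <= ternary_sum b n + 3 / 2 * w ^+ n.
Proof.
have [/subnKC <-|/ltnW/subnKC <-] := leqP m n.
  by apply: le_trans (ternary_sum_le b m (n - m)) _; rewrite lerDl mulr_ge0.
apply: le_trans (ternary_sum_tail b n (m - n)) _.
by rewrite lerD2l ler_wpM2l // lerBlDr lerDl.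
Qed.

Lemma ternary_sum_le_ternary b n : ternary_sum b n <= ternary b.
Proof.
apply: sup_upper_bound; last by exists n.
split; first by exists (ternary_sum b 0), 0%N.
exists (3 / 2) => _ [m _ <-].
by have := ternary_sum_le_bound b m 0; rewrite /= expr0 mulr1 add0r.
Qed.

Lemma ternary_le b n : ternary b <= ternary_sum b n + 3 / 2 * w ^+ n.
Proof.
by apply: ge_sup; [exists (ternary_sum b 0), 0%N | move=> _ [m _ <-]; exact: ternary_sum_le_bound].
Qed.

Lemma ternary_sum_eq b b' m :
  (forall k, (k < m)%N -> b k = b' k) -> ternary_sum b m = ternary_sum b' m.
Proof.
elim: m => [//|m IH] bb' /=.
by rewrite IH ?bb' // => k km; apply: bb'; exact: ltnW.
Qed.

Lemma ternary_lt b b' m : (forall k, (k < m)%N -> b k = b' k) ->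
  b m -> ~~ b' m -> ternary b' < ternary b.
Proof.
move=> /ternary_sum_eq bb' bm /negbTE b'm.
have := ternary_sum_le_ternary b m.+1; have := ternary_le b' m.+1.
rewrite /= bm b'm bb' exprSr mulr0n mul0r addr0 mul1r.
have : 0 < w ^+ m by rewrite exprn_gt0.
lra.
Qed.

Lemma ternary_inj : injective ternary.
Proof.
move=> b b' e; suff bb' m k : (k < m)%N -> b k = b' k.
  by apply: funext => k; exact: (bb' k.+1).
elim: m k => [//|m IH] k; rewrite ltnS leq_eqVlt => /orP[/eqP -> {k}|]; last exact: IH.
have IH' k : (k < m)%N -> b' k = b k by move/IH.
have := ternary_lt IH; have := ternary_lt IH'; rewrite e ltxx.
by case: (b m) (b' m) => -[] // H1 H2; [have := H2 isT isT | have := H1 isT isT].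
Qed.

End ternary_embedding.

Definition rat_cuts {R : realType} (x : R) (n : nat) : bool :=
  if @unpickle rat n is Some q then ratr q < x else false.

Lemma rat_cuts_inj (R : realType) : injective (@rat_cuts R).
Proof.
suff lt_neq (x y : R) : x < y -> rat_cuts x <> rat_cuts y.
  by move=> x y e; case: (ltgtP x y) => // /lt_neq; [move/(_ e)|move/(_ (esym e))].
move=> /rat_in_itvoo[q /andP[]]; rewrite !bnd_simp => xq qy /(congr1 (@^~ (pickle q))).
by rewrite /rat_cuts pickleK qy ltNge (ltW xq).
Qed.

Definition uncurry_bits (u : nat -> nat -> bool) (m : nat) : bool :=
  if @unpickle (nat * nat)%type m is Some (a, b) then u a b else false.

Lemma uncurry_bits_inj : injective uncurry_bits.
Proof.
move=> u v e; apply/funext => a; apply/funext => b.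
by have := congr1 (@^~ (pickle (a, b))) e; rewrite /uncurry_bits pickleK.
Qed.

Lemma real_seq_embedding (R : realType) : exists e : (nat -> R) -> R, injective e.
Proof.
exists (fun u => @ternary R (uncurry_bits (fun n => rat_cuts (u n)))).
move=> u v /ternary_inj/uncurry_bits_inj e; apply/funext => n.
exact/rat_cuts_inj/(congr1 (@^~ n) e).
Qed.

(* Partial bijections between [A] and [B], ordered by inclusion, have a
   maximal element by Zorn's lemma; it is total on [A] or onto [B]. *)
Lemma card_le_total {T U : pointedType} (A : set T) (B : set U) :
  A #<= B \/ B #<= A.
Proof.
pose pbij (G : set (T * U)) :=
  [/\ (forall p, G p -> A p.1 /\ B p.2),
      (forall x y y', G (x, y) -> G (x, y') -> y = y') &
      (forall x x' y, G (x, y) -> G (x', y) -> x = x')].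
have [G [[GAB Gf Gi] Gmax]] : exists G, pbij G /\ forall G', G `<` G' -> ~ pbij G'.
  apply: Zorn_bigcup => F Fpbij Ftot; split.
  - by move=> p [G FG Gp]; have [+ _ _] := Fpbij G FG; apply.
  - move=> x y y' [G1 FG1 G1p] [G2 FG2 G2p].
    have [G12|G21] := Ftot _ _ FG1 FG2.
      by have [_ Gf2 _] := Fpbij G2 FG2; exact: Gf2 (G12 _ G1p) G2p.
    by have [_ Gf1 _] := Fpbij G1 FG1; exact: Gf1 G1p (G21 _ G2p).
  - move=> x x' y [G1 FG1 G1p] [G2 FG2 G2p].
    have [G12|G21] := Ftot _ _ FG1 FG2.
      by have [_ _ Gi2] := Fpbij G2 FG2; exact: Gi2 (G12 _ G1p) G2p.
    by have [_ _ Gi1] := Fpbij G1 FG1; exact: Gi1 G1p (G21 _ G2p).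
have [Gtot|] := pselect (forall a, A a -> exists b, G (a, b)).
  left; have /choice[f fG] : forall a, exists b, A a -> G (a, b).
    by move=> a; have [/Gtot[b]|nAa] := pselect (A a); [exists b|exists point].
  apply/pcard_leP/injfunPex; exists f => [a /fG/GAB[]//|a a' /set_mem Aa /set_mem Aa' ff'].
  by apply: (Gi _ _ (f a)); [exact: fG | rewrite ff'; exact: fG].
move=> /existsNP[a /not_implyP[Aa /forallNP Ga]]; right.
have Gonto b : B b -> exists a', G (a', b).
  move=> Bb; apply: contrapT => Gb; apply: (Gmax (G `|` [set (a, b)])).
    by split=> [p|/(_ (a, b) (or_intror erefl))]; [left|exact: Ga].
  split=> [p [/GAB //|->]|x y y'|x x' y]; first by [].
  - case=> [G1|[? ?]] [G2|[? ?]]; subst => //; first exact: Gf G1 G2.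
      by case: (Ga y).
    by case: (Ga y').
  - case=> [G1|[? ?]] [G2|[? ?]]; subst => //; first exact: Gi G1 G2.
      by case: Gb; exists x.
    by case: Gb; exists x'.
have /choice[g gG] : forall b, exists a', B b -> G (a', b).
  by move=> b; have [/Gonto[a']|nBb] := pselect (B b); [exists a'|exists point].
apply/pcard_leP/injfunPex; exists g => [b /gG/GAB[]//|b b' /set_mem Bb /set_mem Bb' gg'].
by apply: (Gf (g b)); [exact: gG | rewrite gg'; exact: gG].
Qed.

Lemma card_aleph1_le_realT (R : realType) (T : pointedType) (D : set T) :
  card_aleph1 D -> D #<= [set: R].
Proof.
move=> [_ Dmin]; have [//|/pcard_leP/injfunPex[g gD gi]] := card_le_total D [set: R].
have gR : g @` [set: R] #= [set: R] := inj_card_eq gi.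
have : g @` [set: R] #= D.
  apply: Dmin => [_ [r _ <-]|]; first exact: gD.
  by rewrite (eq_countable gR); exact: realT_uncountable.
by rewrite card_eq_sym => /card_eq_trans/(_ gR)/card_eqPle[].
Qed.

Lemma CH_card_aleph1 (R : realType) (T : Type) (A : set T) :
  CH R -> A #= [set: R] -> card_aleph1 A.
Proof.
move=> ch AR; split; first by rewrite (eq_countable AR); exact: realT_uncountable.
move=> B BA Bunc; have /card_eqPle[/pcard_injP[f fi] _] := AR.
have fiB : {in B &, injective f}.
  by move=> x y /set_mem/BA/mem_set xA /set_mem/BA/mem_set; exact: fi.
have fB := inj_card_eq fiB; have [|fBR] := ch (f @` B).
  by rewrite (eq_countable fB).
by apply: card_eq_trans (card_esym fB) (card_eq_trans fBR (card_esym AR)).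
Qed.

Lemma countableU (T : Type) (A B : set T) :
  countable A -> countable B -> countable (A `|` B).
Proof.
move=> cA cB; rewrite -bigcup2inE; apply: bigcup_countable => // -[|[|]] //.
Qed.

Lemma wf_order_countable_segments (T : eqType) : ~ countable [set: T] ->
  exists (lt : T -> T -> Prop) (I : set T),
    [/\ well_founded lt, (forall x y, x <> y -> lt x y \/ lt y x),
        ~ countable I & forall i, I i -> countable [set j | lt j i]].
Proof.
move=> Tunc; have [le le_wo] := well_ordering_principle T.
have /wo_chainW le_total : wo_chain le predT by apply: withinW.
have /wo_chain_antisymmetric le_anti : wo_chain le predT by apply: withinW.
pose lt x y := le x y /\ x <> y.
have lt_total x y : x <> y -> lt x y \/ lt y x.
  by move=> xy; case/orP: (le_total x y isT isT) => ?; [left|right]; split=> // /esym.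
have lt_min (A : set T) : A !=set0 -> exists2 z, A z & forall x, lt x z -> ~ A x.
  case=> x Ax; have [|z [[/set_mem Az zmin] _]] := le_wo (mem A).
    by exists x; exact: mem_set.
  exists z => // y [yz yNz] /mem_set/zmin zy; apply: yNz.
  by apply: le_anti; rewrite ?yz ?zy.
have lt_wf : well_founded lt.
  move=> x; apply: contrapT => xNacc.
  have [z zNacc zmin] := lt_min (fun z => ~ Acc lt z) (ex_intro _ x xNacc).
  by apply: (zNacc); constructor => y /zmin/contrapT.
exists lt; have [segs|] := pselect (forall i, countable [set j | lt j i]).
  by exists [set: T]; split.
move=> /existsNP[i0 i0unc].
have [z zunc zmin] := lt_min (fun z => ~ countable [set j | lt j z]) (ex_intro _ i0 i0unc).
by exists [set j | lt j z]; split=> // i /zmin/contrapT.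
Qed.

Lemma wf_choice (T : Type) (U : pointedType) (lt : T -> T -> Prop)
    (P : (T -> U) -> T -> U -> Prop) :
  well_founded lt ->
  (forall g g' i u, (forall j, lt j i -> g j = g' j) -> P g i u -> P g' i u) ->
  (forall g i, exists u, P g i u) ->
  exists g, forall i, P g i (g i).
Proof.
move=> lt_wf Ploc Pex.
pose below i (rec : forall j, lt j i -> U) j :=
  if pselect (lt j i) is left ji then rec j ji else point.
pose g := Fix lt_wf (fun _ => U) (fun i rec => xget point (P (below i rec) i)).
exists g => i; have -> : g i = xget point (P (below i (fun j _ => g j)) i).
  rewrite /g Fix_eq // => j rec rec' recE; congr xget; congr P.
  by apply/funext => k; rewrite /below; case: pselect.
apply: Ploc (xgetPex point (Pex _ i)) => j ji.
by rewrite /below; case: pselect.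
Qed.

Section linear_span.
Variables (R : realType) (X : normedModType R).
Implicit Types (S : set X) (x y : X).

Lemma lin_span0 S : lin_span S 0.
Proof. by exists 0%N, (fun _ => 0), (fun _ => 0); split=> [[]|]; rewrite ?big_ord0. Qed.

Lemma lin_span_sub S : S `<=` lin_span S.
Proof.
by move=> y Sy; exists 1%N, (fun _ => y), (fun _ => 1); rewrite big_ord1 scale1r.
Qed.

Lemma lin_spanZD S a x y : lin_span S x -> lin_span S y -> lin_span S (a *: x + y).
Proof.
move=> [n [v [c [Sv ->]]]] [m [u [d [Su ->]]]].
pose glue (T : Type) (f : 'I_n -> T) (g : 'I_m -> T) k :=
  match fintype.split k with inl i => f i | inr j => g j end.
exists (n + m)%N, (glue _ v u), (glue _ (fun i => a * c i) d); split.
  by move=> k; rewrite /glue; case: fintype.split.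
rewrite big_split_ord scaler_sumr; congr (_ + _); apply: eq_bigr => i _;
  by rewrite /glue ?(unsplitK (inl i)) ?(unsplitK (inr i)) //= scalerA.
Qed.

Lemma lin_span1 y m : lin_span [set y] m -> exists t, m = t *: y.
Proof.
move=> [n [v [c [/= vy ->]]]]; exists (\sum_(i < n) c i).
by rewrite scaler_suml; apply: eq_bigr => i _; rewrite vy.
Qed.

End linear_span.

Section dominated_extension.
Variables (R : realType) (X : normedModType R).
Implicit Types (G : set (X * R)) (x y z : X).

(* [G] is the graph of a linear functional on a subspace of [X], bounded by the norm *)
Definition dominated_graph G :=
  [/\ G (0, 0),
      (forall x a b, G (x, a) -> G (x, b) -> a = b),
      (forall t x a y b, G (x, a) -> G (y, b) -> G (t *: x + y, t * a + b)) &
      (forall x a, G (x, a) -> a <= `|x|)].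

Definition graph_extend G z c : set (X * R) :=
  [set q | exists y b t, G (y, b) /\ q = (y + t *: z, b + t * c)].

Lemma dominated_graphZ {G} t {x a} : dominated_graph G -> G (x, a) -> G (t *: x, t * a).
Proof. by move=> [G0 _ GD _] /(GD t _ _ _ _)/(_ G0); rewrite !addr0. Qed.

Lemma dominated_graphB {G x a y b} : dominated_graph G -> G (x, a) -> G (y, b) ->
  G (x - y, a - b).
Proof.
by move=> [_ _ GD _] Gxa /(GD (-1) _ _ _ _)/(_ Gxa); rewrite scaleN1r mulN1r !(addrC (- _)).
Qed.

Lemma graph_extend_sub G z c : G `<=` graph_extend G z c.
Proof. by move=> [y b] Gyb; exists y, b, 0; rewrite scale0r mul0r !addr0. Qed.

Lemma graph_extend_new {G} z c : dominated_graph G -> graph_extend G z c (z, c).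
Proof. by case=> G0 _ _ _; exists 0, 0, 1; rewrite scale1r mul1r !add0r. Qed.

Lemma dominated_extension_bound {G} z : dominated_graph G ->
  exists c, forall y b, G (y, b) -> b - `|y - z| <= c /\ c <= `|y + z| - b.
Proof.
move=> [G0 _ GD Gle]; pose E := [set r | exists y b, G (y, b) /\ r = b - `|y - z|].
have E_ub y b : G (y, b) -> ubound E (`|y + z| - b).
  move=> Gyb _ [y' [b' [Gyb' ->]]]; have := Gle _ _ (GD 1 _ _ _ _ Gyb Gyb').
  rewrite scale1r mul1r; have := ler_normD (y + z) (y' - z).
  by rewrite addrACA subrr addr0; lra.
have E_n0 : E !=set0 by exists (0 - `|0 - z|), 0, 0.
exists (sup E) => y b Gyb; split; last exact: ge_sup E_n0 (E_ub _ _ Gyb).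
by apply: ub_le_sup; [exists (`|0 + z| - 0); exact: E_ub G0 | exists y, b].
Qed.

Lemma dominated_graph_extend {G} z c : dominated_graph G -> ~ (exists a, G (z, a)) ->
  (forall y b, G (y, b) -> b - `|y - z| <= c /\ c <= `|y + z| - b) ->
  dominated_graph (graph_extend G z c).
Proof.
move=> domG zNG cb; have [G0 Gfun GD Gle] := domG; split.
- exact: graph_extend_sub.
- move=> _ _ _ [y [b [t [Gyb [-> ->]]]]] [y' [b' [t' [Gyb' [e ->]]]]].
  have tt' : t = t'.
    apply: contrapT => /eqP; rewrite -subr_eq0 => tt'; apply: zNG.
    have zE : (t - t') *: z = y' - y.
      by rewrite scalerBl; apply: (addrI y); rewrite addrA e addrK addrC subrK.
    exists ((t - t')^-1 * (b' - b)).
    rewrite -[z]scale1r -(mulVf tt') -scalerA zE.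
    exact: dominated_graphZ _ domG (dominated_graphB domG Gyb' Gyb).
  by move: e; rewrite -tt' => /addIr eyy'; rewrite (Gfun y b b') // eyy'.
- move=> s _ _ _ _ [y [b [t [Gyb [-> ->]]]]] [y' [b' [t' [Gyb' [-> ->]]]]].
  exists (s *: y + y'), (s * b + b'), (s * t + t'); split; first exact: GD.
  by congr pair; [rewrite scalerDr scalerA scalerDl addrACA | ring].
- move=> _ _ [y [b [t [Gyb [-> ->]]]]].
  have [t0|t0|->] := ltgtP t 0; last by rewrite scale0r mul0r !addr0; exact: Gle.
  + have [+ _] := cb _ _ (dominated_graphZ (- t)^-1 domG Gyb).
    have -> : (- t)^-1 *: y - z = (- t)^-1 *: (y + t *: z).
      by rewrite scalerDr scalerA invrN mulNr mulVf ?lt_eqF // scaleN1r.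
    rewrite normrZ ger0_norm; last by rewrite invr_ge0 oppr_ge0 ltW.
    rewrite -(ler_pM2l (_ : 0 < - t)) ?oppr_gt0 // mulrBr !mulrA.
    by rewrite mulfV ?oppr_eq0 ?lt_eqF // !mul1r; lra.
  + have [_ +] := cb _ _ (dominated_graphZ t^-1 domG Gyb).
    have -> : t^-1 *: y + z = t^-1 *: (y + t *: z).
      by rewrite scalerDr scalerA mulVf ?gt_eqF // scale1r.
    rewrite normrZ ger0_norm; last by rewrite invr_ge0 ltW.
    rewrite -(ler_pM2l t0) mulrBr !mulrA mulfV ?gt_eqF // !mul1r.
    lra.
Qed.

Lemma dominated_graph_bigcup (F : set (set (X * R))) : F !=set0 ->
  total_on F subset -> F `<=` dominated_graph ->
  dominated_graph (\bigcup_(G in F) G).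
Proof.
move=> [G FG] Ftot Fdom.
have common p q : (\bigcup_(G in F) G) p -> (\bigcup_(G in F) G) q ->
    exists2 G, F G & G p /\ G q.
  move=> [G1 FG1 G1p] [G2 FG2 G2q]; have [G12|G21] := Ftot _ _ FG1 FG2.
    by exists G2 => //; split=> //; exact: G12.
  by exists G1 => //; split=> //; exact: G21.
split.
- by have [G0 _ _ _] := Fdom G FG; exists G.
- move=> x a b Ua Ub; have [G' FG' [Ga Gb]] := common _ _ Ua Ub.
  by have [_ Gfun _ _] := Fdom G' FG'; exact: Gfun Ga Gb.
- move=> t x a y b Ua Ub; have [G' FG' [Ga Gb]] := common _ _ Ua Ub.
  by have [_ _ GD _] := Fdom G' FG'; exists G' => //; exact: GD.
- by move=> x a [G' FG' Ga]; have [_ _ _ Gle] := Fdom G' FG'; exact: Gle.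
Qed.

Lemma dominated_graph_total G0 : dominated_graph G0 ->
  exists f : X -> R, [/\ forall a x y, f (a *: x + y) = a * f x + f y,
    forall x, f x <= `|x| & forall x a, G0 (x, a) -> f x = a].
Proof.
move=> domG0; pose P G := G = set0 \/ dominated_graph G /\ G0 `<=` G.
have [G [PG Gmax]] : exists G, P G /\ forall G', G `<` G' -> ~ P G'.
  apply: Zorn_bigcup => F FP Ftot.
  pose F' := F `&` [set G | dominated_graph G /\ G0 `<=` G].
  have FF' : \bigcup_(G in F) G = \bigcup_(G in F') G.
    apply/seteqP; split=> [p [G FG Gp]|p [G [FG _] Gp]]; last by exists G.
    by exists G => //; split=> //; case: (FP G FG) => // G0E; rewrite G0E in Gp.
  have [F'0|/set0P[G FG']] := eqVneq F' set0; first by left; rewrite FF' F'0 bigcup_set0.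
  right; rewrite FF'; split.
    apply: dominated_graph_bigcup; [by exists G | | by move=> ? [_ []]].
    by move=> G1 G2 [FG1 _] [FG2 _]; exact: Ftot.
  by move=> p G0p; exists G => //; case: FG' => _ [_]; apply.
have [domG G0G] : dominated_graph G /\ G0 `<=` G.
  case: PG => // G0E; exfalso; apply: (Gmax G0); last by right; split.
  by rewrite G0E; split=> // /(_ (0, 0)); case: domG0 => G00 _ _ _ /(_ G00).
have Gtot z : exists a, G (z, a).
  apply: contrapT => zNG; have [c cb] := dominated_extension_bound z domG.
  apply: (Gmax (graph_extend G z c)); last by right; split;
    [exact: dominated_graph_extend domG zNG cb | by move=> p /G0G; exact: graph_extend_sub].
  split; first exact: graph_extend_sub.
  by move=> /(_ _ (graph_extend_new z c domG)) Gzc; apply: zNG; exists c.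
have [Gz Gfun GD Gle] := domG.
pose f x := xget 0 [set a | G (x, a)]; have fG x : G (x, f x) := xgetPex 0 (Gtot x).
exists f; split=> [a x y|x|x a /G0G]; [exact: Gfun (fG _) (GD _ _ _ _ _ (fG x) (fG y))
  | exact: Gle | exact: Gfun (fG x)].
Qed.

End dominated_extension.

Section functionals.
Variables (R : realType) (X : normedModType R).
Implicit Types (f : X -> R) (L : set X) (x y : X).

Definition nonzero_functional f := bounded_linear_functional f /\ exists x, f x != 0.

Definition separable := exists D : set X, closure D = setT /\ countable D.

Definition countably_hyperplane_covered (C : set X) :=
  exists H : nat -> set X, (forall n, hyperplane (H n)) /\ C `<=` \bigcup_n H n.

Lemma norm_dominated_bounded f :
  (forall a x y, f (a *: x + y) = a * f x + f y) -> (forall x, f x <= `|x|) ->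
  bounded_linear_functional f.
Proof.
move=> flin fle; split=> //; exists 1 => x; rewrite mul1r ler_norml fle andbT.
have := flin 1 0 0; have := flin (-1) x 0; have := fle (- x).
by rewrite normrN scaleN1r scale1r !addr0 mul1r mulN1r; lra.
Qed.

Lemma separating_functional L : ~ linearly_dense L ->
  exists f, nonzero_functional f /\ (forall y, L y -> f y = 0).
Proof.
move=> Lndense; have /existsNP[x0 x0N] : ~ forall x, closure (lin_span L) x.
  by move=> Ldense; apply/Lndense/seteqP; split.
have [e e0 far] : exists2 e : R, 0 < e & forall m, lin_span L m -> e <= `|x0 - m|.
  move: x0N => /existsNP[B /not_implyP[/nbhs_ballP[e /= e0 eB] /forallNP disj]].
  exists e => // m Lm; rewrite leNgt; apply/negP => m_near; apply: (disj m).
  by split=> //; apply: eB; rewrite -ball_normE.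
pose GL := [set q : X * R | lin_span L q.1 /\ q.2 = 0].
have domGL : dominated_graph GL.
  split=> [|x a b [_ /= ->] [_ /= ->]|t x a y b [Lx /= ->] [Ly /= ->]|x a [_ /= ->]] //.
  - by split=> //; exact: lin_span0.
  - by split; [exact: lin_spanZD | rewrite mulr0 addr0].
have x0NGL : ~ exists a, GL (x0, a).
  by move=> [a [/far]]; rewrite subrr normr0 leNgt e0.
have eb m b : GL (m, b) -> b - `|m - x0| <= e /\ e <= `|m + x0| - b.
  move=> [/= Lm ->]; rewrite sub0r subr0; split.
    by rewrite (le_trans _ (ltW e0)) // oppr_le0.
  rewrite addrC -[m]opprK; apply: far; rewrite -scaleN1r -[_ *: m]addr0.
  exact: lin_spanZD (lin_span0 _).
have [f [flin fle fext]] := dominated_graph_total (dominated_graph_extend domGL x0NGL eb).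
exists f; split; last by move=> y /lin_span_sub Ly; apply: fext; exact: graph_extend_sub.
split; first exact: norm_dominated_bounded.
by exists x0; rewrite (fext _ _ (graph_extend_new x0 e domGL)) gt_eqF.
Qed.

Lemma separable_of_linearly_dense1 y : linearly_dense [set y] -> separable.
Proof.
move=> ydense; pose D := [set ratr q *: y | q in [set: rat]].
exists D; split; last exact: sub_countable (card_image_le _ _) (countableP _).
apply/seteqP; split=> //; rewrite -ydense ((closure_id _).1 (@closed_closure _ D)).
apply: closureS => _ /lin_span1[t ->] B /scalel_continuous/nbhs_ballP[e /= e0 teB].
have [|q qte] := @rat_in_itvoo _ (t - e) (t + e); first by rewrite ltrBlDr -addrA ltrDl addr_gt0.
exists (ratr q *: y); split=> /=; first by exists q.
by apply: teB; rewrite ball_itv.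
Qed.

Lemma exists_functional_vanishing_at : ~ separable ->
  forall y, exists f, nonzero_functional f /\ f y = 0.
Proof.
move=> nonsep y; have [|f [nzf fy]] := @separating_functional [set y].
  by move/separable_of_linearly_dense1.
by exists f; split=> //; exact: fy.
Qed.

End functionals.

Lemma bounded_functional_card_le (R : realType) (X : normedModType R) :
  dual_dens_aleph1 X -> @bounded_linear_functional R X #<= [set: R].
Proof.
move=> [[D [[_ Ddense] Dal]] _].
have /pcard_injP[code code_inj] := card_aleph1_le_realT R Dal.
have /choice[s sP] : forall fn : (X -> R) * nat, exists g,
    bounded_linear_functional fn.1 -> D g /\ forall x, `|fn.1 x - g x| <= fn.2.+1%:R^-1 * `|x|.
  move=> [f n]; have [bf|] := pselect (bounded_linear_functional f); last by exists point.
  by have [|g Dg fg] := Ddense f bf n.+1%:R^-1; [rewrite invr_gt0 | exists g].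
have [e e_inj] := real_seq_embedding R.
apply/pcard_injP; exists (fun f => e (fun n => code (s (f, n)))).
move=> f f' /set_mem bf /set_mem bf' /e_inj ff'; apply/funext => x.
apply/eqP; rewrite -subr_eq0 -normr_le0; apply: (@le0_of_le_divSn _ _ (2 * `|x|)) => n.
have [Dfn fn] := sP (f, n) bf; have [Df'n f'n] := sP (f', n) bf'.
have sff' : s (f, n) = s (f', n).
  by apply: code_inj; rewrite ?inE //; move/(congr1 (@^~ n)): ff'.
have := ler_normB (f x - s (f, n) x) (f' x - s (f', n) x).
rewrite sff' opprB addrA subrK => /le_trans; apply.
have := fn x; have := f'n x; rewrite /= sff' mulrCA.
by move: (_^-1 * `|x|) => c; lra.
Qed.

Section overcomplete_construction.
Variables (R : realType) (X : normedModType R).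
Implicit Types (C S : set X) (F : set (X -> R)) (phi : X -> R).

Lemma avoid_countable_hyperplanes C F phi :
  ~ countably_hyperplane_covered C -> nonzero_functional phi ->
  countable F -> F `<=` @nonzero_functional R X ->
  exists2 x, C x & forall f, F f -> f x != 0.
Proof.
move=> Cncov nzphi Fcount Fnz; apply: contrapT => Cker; apply: Cncov.
have /pfcard_geP[/seteqP[/(_ phi (or_introl erefl))]//|[h]] :
  [set phi] `|` F #<= [set: nat] by exact: countableU (countable1 _) Fcount.
exists (fun n => [set x | h n x = 0]); split.
  move=> n; have [bh nzh] : nonzero_functional (h n).
    by have [->|/Fnz] := 'funS_h (I : [set: nat] n).
  by exists (h n).
move=> x Cx; have [f Ff fx] : exists2 f, F f & f x = 0.
  apply: contrapT => noker; apply: Cker; exists x => // f Ff.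
  by apply/eqP => fx; apply: noker; exists f.
by have [n _ hnf] := 'surj_h (or_intror Ff : (phi |` F) f); exists n => //=; rewrite hnf.
Qed.

Lemma overcomplete_of_countable_kernels S : CH R -> S #= [set: R] ->
  (forall f, nonzero_functional f -> countable (S `&` [set x | f x = 0])) ->
  overcomplete S.
Proof.
move=> ch SR kerS; have Saleph1 := CH_card_aleph1 ch SR.
split=> // L LS LS_eq; apply: contrapT => /separating_functional[f [nzf fL]].
apply: Saleph1.1; rewrite -(eq_countable LS_eq).
by apply: sub_countable (subset_card_le _) (kerS f nzf) => x Lx; split; [exact: LS|exact: fL].
Qed.

End overcomplete_construction.

Section transfinite_construction.
Variables (R : realType) (X : normedModType R) (C : set X).
Hypotheses (Cncov : ~ countably_hyperplane_covered C) (nonsep : ~ separable X).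

(* Each new point also avoids a hyperplane through every earlier point,
   which keeps the points distinct. *)
Lemma transfinite_avoiding_choice (T : Type) (lt : T -> T -> Prop) (I : set T)
    (e : T -> X -> R) :
  well_founded lt -> (forall i j, i <> j -> lt i j \/ lt j i) ->
  (forall i, I i -> countable [set j | lt j i]) ->
  (forall j, I j -> nonzero_functional (e j)) ->
  exists g : T -> X, forall i, I i -> [/\ C (g i),
    forall j, I j -> ~ lt i j -> e j (g i) != 0 & forall j, lt j i -> g j != g i].
Proof.
move=> lt_wf lt_total Iseg eF.
have /choice[ker kerP] := exists_functional_vanishing_at nonsep.
pose good (g : T -> X) i x := I i -> [/\ C x, forall j, I j -> ~ lt i j -> e j x != 0
  & forall j, lt j i -> ker (g j) x != 0].
have [g gP] : exists g, forall i, good g i (g i).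
  apply: wf_choice lt_wf _ _ => [g g' i x gg' + Ii|g i].
    by case/(_ Ii)=> Cx ex kx; split=> // j ji; rewrite -gg' //; exact: kx.
  have [Ii|NIi] := pselect (I i); last by exists point => /NIi.
  pose F := e @` [set j | I j /\ ~ lt i j] `|` (ker \o g) @` [set j | lt j i].
  have Fcount : countable F.
    apply: countableU; apply: sub_countable (card_image_le _ _) _; last exact: Iseg.
    apply: (sub_countable _ (countableU (Iseg _ Ii) (countable1 i))).
    apply: subset_card_le => j [Ij Nij]; have [->|/lt_total[|ji]] := pselect (j = i).
    - by right.
    - by left.
    - by case: Nij.
  have Fnz : F `<=` @nonzero_functional R X.
    by move=> _ [[j [Ij _] <-]|[j _ <-]]; [exact: eF | exact: (kerP _).1].
  have [x Cx xF] := avoid_countable_hyperplanes Cncov (kerP 0).1 Fcount Fnz.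
  by exists x => _; split=> // j => [Ij Nij|ji]; apply: xF; [left|right]; exists j.
exists g => i Ii; have [Cg eg kg] := gP i Ii; split=> // j ji.
by apply/eqP => gji; have := kg j ji; rewrite -gji (kerP _).2 eqxx.
Qed.

Lemma exists_subset_countable_kernels : CH R -> @nonzero_functional R X #<= [set: R] ->
  exists S, [/\ S `<=` C, S #= [set: R] &
    forall f, nonzero_functional f -> countable (S `&` [set x | f x = 0])].
Proof.
move=> ch Fcard.
have [lt [I [lt_wf lt_total Iunc Iseg]]] := wf_order_countable_segments (@realT_uncountable R).
have IR : I #= [set: R] by case: (ch I) => // /Iunc.
have [phi [nzphi _]] := exists_functional_vanishing_at nonsep 0.
have /pfcard_geP[/seteqP[/(_ phi nzphi)]//|[e]] : @nonzero_functional R X #<= I.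
  by apply: card_le_trans Fcard _; case/card_eqPle: IR.
have [g gP] := transfinite_avoiding_choice lt_wf lt_total Iseg (fun j Ij => 'funS_e Ij).
have g_inj : {in I &, injective g}.
  move=> i j /set_mem Ii /set_mem Ij gij; apply: contrapT => /lt_total[ij|ji].
    by have [_ _ /(_ i ij)] := gP j Ij; rewrite gij eqxx.
  by have [_ _ /(_ j ji)] := gP i Ii; rewrite gij eqxx.
exists (g @` I); split.
- by move=> _ [i Ii <-]; have [] := gP i Ii.
- exact: card_eq_trans (inj_card_eq g_inj) IR.
- move=> f /'surj_e[i Ii <-].
  apply: sub_countable (subset_card_le _) (sub_countable (card_image_le g _) (Iseg i Ii)).
  move=> _ [[j Ij <-] /= eij]; exists j => //; apply: contrapT => Nji.
  by have [_ /(_ i Ii Nji)/eqP + _] := gP j Ij; apply.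
Qed.

End transfinite_construction.

Theorem theorem3p1 (R : realType) (X : completeNormedModType R) (C : set X) :
  CH R ->
  dens_aleph1 X ->
  dual_dens_aleph1 X ->
  ~ (exists H : nat -> set X, (forall n, hyperplane (H n)) /\
       C `<=` \bigcup_n H n) ->
  exists S, S `<=` C /\ overcomplete S.
Proof.
move=> ch [_ nonsep] dual_dens Cncov.
have Fcard : @nonzero_functional R X #<= [set: R].
  by apply: card_le_trans (bounded_functional_card_le dual_dens); apply: subset_card_le => f [].
have [S [SC SR kerS]] := exists_subset_countable_kernels Cncov nonsep ch Fcard.
by exists S; split; last exact: overcomplete_of_countable_kernels.
Qed.
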